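(* Let $S$ be a monoid, $A_S$ a Rees artinian (in particular, an artinian) right $S$-act, and $f\in\mathrm{End}(A_S)$. Then there is $n\in\mathbb N$ with $\ker f^n\vee\mathcal K_{\mathrm{Im} f^n}=\nabla_A$. Moreover, $f$ is an automorphism if and only if $f$ is injective.
   Context: $\ker h=\{(a,a'):h(a)=h(a')\}$; for a subact $B\subseteq A$, $\mathcal K_B=(B\times B)\cup\Delta_A$ where $\Delta_A=\{(a,a):a\in A\}$; $\nabla_A=A\times A$; $\vee$ is the join in the lattice of congruences on $A_S$. Rees artinian means the descending chain condition on subacts; artinian means the descending chain condition on congruences. *)

From Stdlib Require Import Arith.

Record Monoid := {
  mcar :> Type;
  mmul : mcar -> mcar -> mcar;
  mone : mcar;
  mmul_assoc : forall x y z, mmul x (mmul y z) = mmul (mmul x y) z;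
  mmul_1l : forall x, mmul mone x = x;
  mmul_1r : forall x, mmul x mone = x
}.

Record RAct (S : Monoid) := {
  acar :> Type;
  act : acar -> S -> acar;
  act_one : forall a, act a (mone S) = a;
  act_mul : forall a s t, act (act a s) t = act a (mmul S s t)
}.
Arguments act {S} _ _ _.

Section Acts.
Context {S : Monoid} (A : RAct S).

(* subacts (possibly empty) *)
Definition is_subact (B : A -> Prop) : Prop :=
  forall a s, B a -> B (act A a s).

Definition rees_artinian : Prop :=
  forall B : nat -> A -> Prop,
    (forall n, is_subact (B n)) ->
    (forall n a, B (Nat.succ n) a -> B n a) ->
    exists n, forall m, n <= m -> forall a, B m a <-> B n a.

Definition is_endo (f : A -> A) : Prop :=
  forall a s, f (act A a s) = act A (f a) s.

Definition is_auto (f : A -> A) : Prop :=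
  is_endo f /\ exists g, is_endo g /\ (forall a, g (f a) = a) /\ (forall a, f (g a) = a).

Definition injective (f : A -> A) : Prop := forall a b, f a = f b -> a = b.

Definition is_congruence (rho : A -> A -> Prop) : Prop :=
  (forall a, rho a a) /\ (forall a b, rho a b -> rho b a) /\
  (forall a b c, rho a b -> rho b c -> rho a c) /\
  (forall a b s, rho a b -> rho (act A a s) (act A b s)).

Definition cjoin (r1 r2 : A -> A -> Prop) : A -> A -> Prop :=
  fun a b => forall rho, is_congruence rho ->
    (forall x y, r1 x y -> rho x y) -> (forall x y, r2 x y -> rho x y) -> rho a b.

Definition kerrel (h : A -> A) : A -> A -> Prop := fun a a' => h a = h a'.

Definition Krel (B : A -> Prop) : A -> A -> Prop := fun a b => (B a /\ B b) \/ a = b.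

Definition image (h : A -> A) : A -> Prop := fun b => exists a, h a = b.

Definition nabla : A -> A -> Prop := fun _ _ => True.

End Acts.

Definition fpow {T : Type} (f : T -> T) (n : nat) : T -> T := Nat.iter n f.

(* For an endomorphism f of a right S-act A, the images Im f^k form a descending
   chain of subacts, so by the descending chain condition they stabilise: there is
   n >= 1 with Im f^n = Im f^(2n) = Im f^(n+1).
   - From Im f^n ⊆ Im f^(2n), every a is (ker f^n)-related to an element of
     Im f^n, namely f^n c where f^(2n) c = f^n a.  Any congruence containing
     ker f^n and K_{Im f^n} therefore relates a to f^n c, f^n c to f^n d (both
     in Im f^n), and f^n d to b: the join is the universal relation.
   - From Im f^n ⊆ Im f^(n+1) and injectivity of f^n, f is surjective; a
     bijective endomorphism is an automorphism, its inverse (obtained by choice)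
     being automatically an endomorphism. *)

From Stdlib Require Import Arith Lia ClassicalEpsilon.

Lemma fpow_S_r {T : Type} (f : T -> T) (n : nat) (x : T) :
  fpow f (S n) x = fpow f n (f x).
Proof.
  unfold fpow; induction n as [|n IH]; simpl; [reflexivity|].
  simpl in IH; now rewrite IH.
Qed.

Lemma fpow_add {T : Type} (f : T -> T) (n m : nat) (x : T) :
  fpow f (n + m) x = fpow f n (fpow f m x).
Proof. unfold fpow; induction n as [|n IH]; simpl; [reflexivity|]; now rewrite IH. Qed.

Section Iterates.
Context {M : Monoid} (A : RAct M) (f : A -> A).

Lemma fpow_endo (n : nat) : is_endo A f -> is_endo A (fpow f n).
Proof.
  intros Hf a s; induction n as [|n IH]; simpl; [reflexivity|].
  unfold fpow in *; simpl; now rewrite IH, Hf.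
Qed.

Lemma fpow_inj (n : nat) : injective A f -> injective A (fpow f n).
Proof. intros Hf; induction n as [|n IH]; intros a b E; simpl in *; auto. Qed.

Lemma image_subact (h : A -> A) : is_endo A h -> is_subact A (image A h).
Proof. intros Hh a s [x <-]; exists (act A x s); apply Hh. Qed.

Lemma image_fpow_succ (k : nat) (a : A) :
  image A (fpow f (S k)) a -> image A (fpow f k) a.
Proof. intros [x <-]; exists (f x); symmetry; apply fpow_S_r. Qed.

Lemma image_fpow_stable :
  rees_artinian A -> is_endo A f ->
  exists n, forall m, n <= m -> forall a, image A (fpow f m) a <-> image A (fpow f n) a.
Proof.
  intros HR Hf; apply HR.
  - intros k; apply image_subact, fpow_endo, Hf.
  - exact image_fpow_succ.
Qed.

Lemma image_fpow_square (n : nat) :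
  (forall m, n <= m -> forall a, image A (fpow f m) a <-> image A (fpow f n) a) ->
  forall a, image A (fpow f (S n)) a -> image A (fun x => fpow f (S n) (fpow f (S n) x)) a.
Proof.
  intros Hn a Ha.
  destruct (proj2 (Hn (S n + S n) ltac:(lia) a) (proj1 (Hn (S n) ltac:(lia) a) Ha)) as [c <-].
  exists c; symmetry; apply fpow_add.
Qed.

End Iterates.

Section Consequences.
Context {M : Monoid} (A : RAct M).

(* If every element is r-related to an element of B, then the join of r and K_B
   is the universal relation: a ~ c ~ d ~ b with c, d in B. *)
Lemma cjoin_Krel_full (r : A -> A -> Prop) (B : A -> Prop) :
  (forall a, exists c, B c /\ r a c) ->
  forall a b, cjoin A r (Krel A B) a b.
Proof.
  intros Hcover a b rho [_ [Hsym [Htrans _]]] Hr HK.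
  destruct (Hcover a) as [c [Bc Hac]], (Hcover b) as [d [Bd Hbd]].
  apply Htrans with c; [now apply Hr|].
  apply Htrans with d; [apply HK; now left|].
  apply Hsym, Hr, Hbd.
Qed.

Lemma ker_meets_image (h : A -> A) :
  (forall a, image A h a -> image A (fun x => h (h x)) a) ->
  forall a, exists c, image A h c /\ kerrel A h a c.
Proof.
  intros Hsq a.
  destruct (Hsq (h a) (ex_intro _ a eq_refl)) as [c Hc].
  exists (h c); split; [now exists c|].
  unfold kerrel; now rewrite Hc.
Qed.

Lemma bijective_endo_auto (f : A -> A) :
  is_endo A f -> injective A f -> (forall a, exists c, f c = a) -> is_auto A f.
Proof.
  intros Hf Hinj Hsurj.
  set (g := fun a => proj1_sig (constructive_indefinite_description _ (Hsurj a))).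
  assert (Hfg : forall a, f (g a) = a).
  { intros a; unfold g; now destruct constructive_indefinite_description. }
  split; [exact Hf|]; exists g; repeat split.
  - intros a s; apply Hinj; now rewrite Hf, !Hfg.
  - intros a; apply Hinj; now rewrite Hfg.
  - exact Hfg.
Qed.

Lemma auto_injective (f : A -> A) : is_auto A f -> injective A f.
Proof. intros [_ [g [_ [Hgf _]]]] x y E; now rewrite <- (Hgf x), <- (Hgf y), E. Qed.

Lemma injective_surjective (f : A -> A) (n : nat) :
  injective A f ->
  (forall a, image A (fpow f n) a -> image A (fpow f (S n)) a) ->
  forall a, exists c, f c = a.
Proof.
  intros Hinj Hstep a.
  destruct (Hstep (fpow f n a) (ex_intro _ a eq_refl)) as [c Hc].
  exists c; rewrite fpow_S_r in Hc; exact (fpow_inj A f n Hinj _ _ Hc).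
Qed.

End Consequences.

Theorem mainTheorem10 (S : Monoid) (A : RAct S) (f : A -> A) :
  rees_artinian A -> is_endo A f ->
  (exists n : nat, 1 <= n /\
     forall a b, cjoin A (kerrel A (fpow f n)) (Krel A (image A (fpow f n))) a b
                 <-> nabla A a b)
  /\ (is_auto A f <-> injective A f).
Proof.
  intros HR Hf.
  destruct (image_fpow_stable A f HR Hf) as [n Hn].
  split.
  - exists (Nat.succ n); split; [apply le_n_S, Nat.le_0_l|].
    intros a b; split; [intros _; exact I|intros _].
    apply cjoin_Krel_full, ker_meets_image, (image_fpow_square A f n Hn).
  - split; [apply auto_injective|].
    intros Hinj; apply bijective_endo_auto; [exact Hf|exact Hinj|].
    apply (injective_surjective A f n Hinj).
    intros a Ha; apply (Hn (Nat.succ n) (Nat.le_succ_diag_r n) a), Ha.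
Qed.
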